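(* Consider long-range first-passage percolation on $\mathbb{Z}^d$ (setting in the context) with $r(k)=k^{-\alpha}$, $k\ge1$, where $\alpha>2d+1$. Let $\theta\in(0,1)$ and $c_1,c_2>0$. Then there is a constant $C>0$ such that for all $n\ge1$, $$\mathbb{P}\big(W_{\langle zw\rangle}\ge c_1n\text{ for all }z\in B(0,c_2n)\text{ and }w\notin B(z,n^\theta)\big)\ge1-Cn^{d+1-\theta(\alpha-d)}.$$
   Context: Let $d\ge1$, $\|x\|_1=\sum_i|x_i|$, $\|x\|_\infty=\max_i|x_i|$, and $B(u,s)=\{x\in\mathbb{Z}^d:\|x-u\|_\infty\le s\}$. Let $\mathcal{E}$ be the set of unordered pairs $e=\langle xy\rangle$ of distinct points of $\mathbb{Z}^d$, with length $\|e\|_1=\|x-y\|_1$. Let $(\omega_e)$ be i.i.d. mean-one exponential random variables and $W_e=\omega_e/r(\|e\|_1)$. *)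

From HB Require Import structures.
From mathcomp Require Import all_boot all_order all_algebra.
From mathcomp Require Import all_classical all_reals all_analysis.
Set Implicit Arguments. Unset Strict Implicit. Unset Printing Implicit Defensive.
Import Order.TTheory GRing.Theory Num.Theory.
Local Open Scope classical_set_scope.
Local Open Scope ring_scope.

Definition Zd (d : nat) := 'I_d -> int.

Definition l1dist {R : realType} {d : nat} (x y : Zd d) : R :=
  (\sum_(i < d) `|x i - y i|)%:~R.

Definition linfdist {d : nat} (x y : Zd d) : int :=
  \big[Num.max/0]_(i < d) `|x i - y i|.

Definition inB {R : realType} {d : nat} (u : Zd d) (s : R) (x : Zd d) : Prop :=
  (linfdist x u)%:~R <= s.

Definition same_edge {d : nat} (e e' : Zd d * Zd d) : Prop :=
  (e.1 = e'.1 /\ e.2 = e'.2) \/ (e.1 = e'.2 /\ e.2 = e'.1).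

(* omega : a family indexed by unordered pairs <x y> of distinct points,
   represented as a symmetric function of ordered pairs; the (omega_e) are
   i.i.d. mean-one exponential random variables on the probability space P. *)
Definition iid_exp1_edges {R : realType} {dT : measure_display}
  {T : measurableType dT} (P : probability T R) {d : nat}
  (omega : Zd d -> Zd d -> T -> R) : Prop :=
  [/\ (forall x y, omega x y = omega y x),
      (forall x y, x <> y -> measurable_fun setT (omega x y)),
      (forall x y, x <> y -> forall A : set R, measurable A ->
          P (omega x y @^-1` A) = exponential_prob 1 A) &
      (forall (m : nat) (e : 'I_m -> Zd d * Zd d),
          (forall i, (e i).1 <> (e i).2) ->
          (forall i j, i <> j -> ~ same_edge (e i) (e j)) ->
          forall A : 'I_m -> set R, (forall i, measurable (A i)) ->
          P (\bigcap_(i in [set: 'I_m]) (omega (e i).1 (e i).2 @^-1` A i)) =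
          (\prod_(i < m) P (omega (e i).1 (e i).2 @^-1` A i))%E)].

Definition rpow {R : realType} (alpha k : R) : R := k `^ (- alpha).

Definition Wgt {R : realType} {T : Type} {d : nat} (alpha : R)
  (omega : Zd d -> Zd d -> T -> R) (x y : Zd d) (t : T) : R :=
  omega x y t / rpow alpha (l1dist x y).

Definition zeroZd (d : nat) : Zd d := fun _ => 0.

From HB Require Import structures.
From mathcomp Require Import all_boot all_order all_algebra.
From mathcomp Require Import all_classical all_reals all_analysis.
From mathcomp Require Import measurable_realfun.
From mathcomp Require Import zify ring lra.
Import Order.TTheory GRing.Theory Num.Theory.
Local Open Scope classical_set_scope.
Local Open Scope ring_scope.

(* Union bound.  A pair (z, w) with z in B(0, c2 n) and ||w - z||_oo = k is
   light (W_zw < c1 n) with probability at most c1 n k^-alpha, because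
   P(omega <= x) <= x for a mean-one exponential and ||w - z||_1 >= k.  There
   are O(n^d k^(d-1)) such pairs, and k^(d-1-alpha) <= m^(d+1-alpha) k^-2 for
   k > m = n^theta, so summing over k > m bounds the failure probability by
   O(n^(d+1) m^(d-alpha)). *)

Set Implicit Arguments. Unset Strict Implicit. Unset Printing Implicit Defensive.

Lemma exponential_prob_Iic_le (R : realType) (a : R) : 0 < a ->
  (exponential_prob (1 : R) `]-oo, a] <= a%:E)%E.
Proof.
move=> a0.
rewrite /exponential_prob (@itv_bndbnd_setU _ _ _ (BLeft 0)) //; last first.
  by rewrite bnd_simp ltW.
rewrite ge0_integral_setU //=.
- rewrite integral0_eq /=; last first.
    by move=> x /=; rewrite in_itv /= => x0; rewrite lt0_exponential_pdf.
  rewrite add0e.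
  have := @exponential_prob_itv0c R 1 a a0; rewrite /exponential_prob => ->.
  rewrite -EFinB lee_fin ?mulN1r ?mulNr ?mul1r; have := expR_ge1Dx (- a); lra.
- apply/measurable_EFinP; apply: measurable_funTS.
  exact: measurable_exponential_pdf.
- by move=> x _; rewrite lee_fin exponential_pdf_ge0.
- apply/disj_setPS => x [] /=; rewrite !in_itv /= => x0 /andP[]; lra.
Qed.

Lemma content_bigsetU_le dT (T : ringOfSetsType dT) (R : realFieldType)
    (mu : {content set T -> \bar R}) (I : finType) (F : I -> set T) :
  (forall i, measurable (F i)) ->
  (mu (\big[setU/set0]_(i : I) F i) <= \sum_(i : I) mu (F i))%E.
Proof.
move=> Fm.
pose measurable_le (A : set T) (x : \bar R) := measurable A /\ (mu A <= x)%E.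
suff [] : measurable_le (\big[setU/set0]_(i : I) F i) (\sum_(i : I) mu (F i)) by [].
apply: big_ind2 => [|A a B b [Am Aa] [Bm Bb]|i _]; rewrite /measurable_le.
- by rewrite measure0.
- split; first exact: measurableU.
  exact: le_trans (measureU2 _ Am Bm) (leeD Aa Bb).
- by split.
Qed.

Lemma bigsetU_finP (T : Type) (I : finType) (F : I -> set T) t :
  (\big[setU/set0]_(i : I) F i) t <-> exists i, F i t.
Proof.
split; last by move=> [i Fit]; rewrite (bigD1 i) //=; left.
by elim/big_ind: _ => [//|A B IHA IHB [/IHA|/IHB] //|i _ Fit]; exists i.
Qed.

Lemma ler_powRN (R : realType) (r a b : R) : 0 <= r -> 0 < a -> a <= b ->
  b `^ (- r) <= a `^ (- r).
Proof.
move=> r0 a0 ab; rewrite !powRN lef_pV2 ?posrE ?powR_gt0 //; try lra.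
by apply: ge0_ler_powR => //; rewrite nnegrE; lra.
Qed.

Lemma invSr_sqr_le (R : realType) (x : R) : 0 < x ->
  ((x + 1) ^+ 2)^-1 <= x^-1 - (x + 1)^-1.
Proof.
move=> x0.
have -> : x^-1 - (x + 1)^-1 = (x * (x + 1))^-1.
  by field; rewrite ?lt0r_neq0 //; lra.
by rewrite lef_pV2 ?posrE; nra.
Qed.

Lemma sum_inv_sqr_tail_le (R : realType) (j M : nat) : (0 < j)%N ->
  \sum_(j.+1 <= k < M) ((k%:R : R) ^+ 2)^-1 <= j%:R^-1.
Proof.
move=> j0.
have telescoped n :
    \sum_(j.+1 <= k < n.+1) ((k%:R : R) ^+ 2)^-1 <= j%:R^-1 - (maxn j n)%:R^-1.
  elim: n => [|n IH]; first by rewrite big_geq // maxn0 subrr.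
  have [jn|nj] := leqP j n; last by rewrite big_geq // (maxn_idPl nj) subrr.
  rewrite big_nat_recr //= (maxn_idPr (leqW jn)).
  rewrite (maxn_idPr jn) in IH.
  have n0 : (0 : R) < n%:R by rewrite ltr0n; lia.
  have := invSr_sqr_le n0; rewrite natr1 => step.
  by apply: le_trans (lerD IH step) _; rewrite addrA subrK.
case: M => [|M]; first by rewrite big_geq // invr_ge0 ler0n.
have := telescoped M; have : 0 <= ((maxn j M)%:R : R)^-1 by rewrite invr_ge0.
lra.
Qed.

Lemma shell_term_le (R : realType) (d k : nat) (alpha m : R) :
  0 < m -> m < k%:R -> d%:R + 2 <= alpha ->
  (2 * k + 1)%:R ^+ d * k%:R `^ (- alpha) <=
    3 ^+ d * m `^ (d%:R + 2 - alpha) * ((k%:R : R) ^+ 2)^-1.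
Proof.
move=> m0 mk ha.
have k0 : (0 : R) < k%:R by lra.
have shell_le : (2 * k + 1)%:R ^+ d <= (3 : R) ^+ d * k%:R ^+ d.
  rewrite -exprMn; apply: lerXn2r; rewrite ?nnegrE; try lra.
  have : (1 : R) <= k%:R by rewrite ler1n -(ltr0n R).
  by rewrite natrD natrM; lra.
have powE : (k%:R : R) ^+ d * k%:R `^ (- alpha) =
    k%:R `^ (d%:R + 2 - alpha) * ((k%:R : R) ^+ 2)^-1.
  rewrite -!powR_mulrn ?ltW // -powRN -!powRD; try by apply/implyP => _; lra.
  by congr (_ `^ _); ring.
apply: (le_trans (ler_wpM2r (powR_ge0 _ _) shell_le)).
rewrite -[X in X <= _]mulrA powE [X in X <= _]mulrA.
apply: ler_wpM2r; first by rewrite invr_ge0 exprn_ge0 // ltW.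
apply: ler_wpM2l; first by rewrite exprn_ge0.
rewrite (_ : d%:R + 2 - alpha = - (alpha - d%:R - 2)); last by ring.
apply: ler_powRN; lra.
Qed.

Lemma shell_series_le (R : realType) (d : nat) (alpha m : R) :
  1 <= m -> d%:R + 2 <= alpha -> forall M,
  \sum_(k < M | m < k%:R) (2 * k + 1)%:R ^+ d * k%:R `^ (- alpha) <=
    2 * 3 ^+ d * m `^ (d%:R + 1 - alpha).
Proof.
move=> m1 ha M.
have m0 : 0 < m by lra.
set j := Num.trunc m.
have /andP[hj1 hj2] := truncn_itv (ltW m0); rewrite -/j in hj1 hj2.
have j0 : (0 < j)%N by rewrite lt0n; apply/eqP => j0; move: hj2; rewrite j0; lra.
have gt_mE (k : nat) : (m < k%:R) = (j < k)%N.
  apply/idP/idP => h; first by rewrite -(ltr_nat R); lra.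
  have : (j.+1%:R : R) <= k%:R by rewrite ler_nat.
  lra.
set Q := 3 ^+ d * m `^ (d%:R + 2 - alpha).
have Q0 : 0 <= Q by rewrite mulr_ge0 ?exprn_ge0 ?powR_ge0.
apply: (@le_trans _ _ (Q * \sum_(j.+1 <= k < M) ((k%:R : R) ^+ 2)^-1)).
  rewrite mulr_sumr big_geq_mkord.
  under eq_bigl => k do rewrite gt_mE.
  by apply: ler_sum => k jk; apply: shell_term_le; rewrite ?gt_mE.
apply: (le_trans (ler_wpM2l Q0 (sum_inv_sqr_tail_le _ M j0))).
have inv_j_le : (j%:R : R)^-1 <= 2 / m.
  rewrite -(invf_div m 2) lef_pV2 ?posrE ?ltr0n ?divr_gt0 //.
  have : (1 : R) <= j%:R by rewrite ler1n.
  by rewrite -natr1 in hj2; lra.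
apply: (le_trans (ler_wpM2l Q0 inv_j_le)); rewrite /Q.
have -> : m `^ (d%:R + 2 - alpha) = m `^ (d%:R + 1 - alpha) * m.
  rewrite -{3}(powRr1 (ltW m0)) -powRD; last by apply/implyP => _; lra.
  by congr (_ `^ _); ring.
by rewrite le_eqVlt; apply/orP; left; apply/eqP; field; lra.
Qed.

Section Distances.
Variable d : nat.
Implicit Types x u : Zd d.

Lemma linfdist_ge_coord x u j : `|x j - u j| <= linfdist x u.
Proof. exact: le_bigmax. Qed.

Lemma linfdist_le x u (b : int) : 0 <= b ->
  (forall j, `|x j - u j| <= b) -> linfdist x u <= b.
Proof. by move=> b0 h; apply: bigmax_le. Qed.

Lemma l1dist_ge_coord (R : realType) x u j :
  (`|x j - u j|%:~R : R) <= l1dist x u.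
Proof.
rewrite /l1dist ler_int (bigD1 j) //= lerDl.
by apply: sumr_ge0 => ? _.
Qed.

Lemma l1dist_xx (R : realType) x : l1dist x x = 0 :> R.
Proof. by rewrite /l1dist big1 // => j _; rewrite subrr. Qed.

Lemma l1dist_gt0_neq (R : realType) x u : (0 : R) < l1dist x u -> x <> u.
Proof. by move=> xu0 xu; move: xu0; rewrite xu l1dist_xx ltxx. Qed.

Lemma inB0_coord_le (R : realType) (s : R) x j : 0 <= s ->
  inB (@zeroZd d) s x -> `|x j| <= (Num.trunc s)%:Z.
Proof.
move=> s0 hx.
have /andP[_ s_lt] := truncn_itv s0.
have xj_le : (`|x j|%:~R : R) <= s.
  apply: le_trans hx; rewrite ler_int.
  by have := linfdist_ge_coord x (@zeroZd d) j; rewrite /zeroZd subr0.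
have : (`|x j|%:~R : R) < ((Num.trunc s).+1%:Z)%:~R := le_lt_trans xj_le s_lt.
by rewrite ltr_int; lia.
Qed.

End Distances.

Lemma linfdist_attained d (x u : Zd d.+1) : exists j, linfdist x u = `|x j - u j|.
Proof. by rewrite /linfdist (bigmax_eq_arg _ ord0) //; eexists. Qed.

(* A shell code of radii [K] and [k] encodes the pair [(z, z + v)], where [z]
   lies in the box [[-K, K]^(d+1)] and [v] has [|v_i| = k] for a distinguished
   coordinate [i] (with sign [s]) and [|v_j| <= k] elsewhere.  Every pair with
   [z] in the box and [||w - z||_oo = k] is encoded, possibly several times. *)
Definition box_point d K (zu : {ffun 'I_d -> 'I_(2 * K).+1}) : Zd d :=
  fun j => (zu j)%:Z - K%:Z.

Definition shell_vec d k (i : 'I_d.+1) (s : bool)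
    (u : {ffun 'I_d -> 'I_(2 * k).+1}) : Zd d.+1 :=
  fun j => match unlift i j with
           | Some j' => (u j')%:Z - k%:Z
           | None => if s then k%:Z else - k%:Z
           end.

Definition shell_code d K k := ({ffun 'I_d.+1 -> 'I_(2 * K).+1} *
  ('I_d.+1 * bool * {ffun 'I_d -> 'I_(2 * k).+1}))%type.

Definition code_pair d K k (x : shell_code d K k) : Zd d.+1 * Zd d.+1 :=
  let z := box_point x.1 in
  (z, fun j => z j + shell_vec x.2.1.1 x.2.1.2 x.2.2 j).

Lemma card_shell_code d K k :
  #|{: shell_code d K k}| = ((2 * K).+1 ^ d.+1 * (d.+1 * 2 * (2 * k).+1 ^ d))%N.
Proof. by rewrite !card_prod !card_ffun !card_ord card_bool. Qed.

Lemma box_point_le d K zu j : `|@box_point d K zu j| <= K%:Z.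
Proof. by rewrite /box_point; have := ltn_ord (zu j); lia. Qed.

Lemma shell_vec_at d k i s u : `|@shell_vec d k i s u i| = k%:Z.
Proof. by rewrite /shell_vec unlift_none; case: s; lia. Qed.

Lemma code_pair_surj d K (z w : Zd d.+1) : (forall j, `|z j| <= K%:Z) ->
  exists k, exists x : shell_code d K k,
    code_pair x = (z, w) /\ k%:Z = linfdist w z.
Proof.
move=> zK.
have [i wz_i] := linfdist_attained w z.
set k := absz (linfdist w z).
have kE : k%:Z = linfdist w z by rewrite /k wz_i abszE normr_id.
pose zu : {ffun 'I_d.+1 -> 'I_(2 * K).+1} :=
  [ffun j => inord (absz (z j + K%:Z))].
pose u : {ffun 'I_d -> 'I_(2 * k).+1} :=
  [ffun j' => inord (absz (w (lift i j') - z (lift i j') + k%:Z))].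
exists k, (zu, (i, (0 <= w i - z i), u)); split => //.
have zuE : box_point zu = z.
  by apply: funext => j; rewrite /box_point ffunE inordK; have := zK j; lia.
rewrite /code_pair /= zuE; congr pair.
apply: funext => j; rewrite /shell_vec.
case: unliftP => [j' ->|->]; last by case: ifP; lia.
by rewrite ffunE inordK; have := linfdist_ge_coord w z (lift i j'); lia.
Qed.

Lemma code_pair_far (R : realType) d (s m : R) k
    (x : shell_code d (Num.trunc s) k) : 0 <= s -> m < k%:R ->
  inB (@zeroZd d.+1) s (code_pair x).1 /\ ~ inB (code_pair x).1 m (code_pair x).2.
Proof.
case: x => zu [[i b] u] s0 mk; rewrite /code_pair /inB /=; split.
  apply: (@le_trans _ _ (Num.trunc s)%:R); last by rewrite truncn_le.
  rewrite [_%:R]pmulrn ler_int.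
  apply: linfdist_le => // j; rewrite /zeroZd subr0; exact: box_point_le.
apply/negP; rewrite -ltNge; apply: lt_le_trans mk _.
rewrite [_%:R]pmulrn ler_int -(shell_vec_at i b u).
by apply: le_trans (linfdist_ge_coord _ _ i); rewrite addrC addKr.
Qed.

Lemma l1dist_code_pair_ge (R : realType) d K k (x : shell_code d K k) :
  (k%:R : R) <= l1dist (code_pair x).1 (code_pair x).2.
Proof.
case: x => zu [[i b] u]; rewrite /code_pair /=.
apply: le_trans (l1dist_ge_coord _ _ _ i).
by rewrite opprD addrA subrr add0r normrN shell_vec_at pmulrn.
Qed.

Lemma shell_code_sum_le (R : realType) d K (alpha a m : R) :
  0 <= a -> 1 <= m -> d%:R + 2 <= alpha -> forall M,
  \sum_(k < M) #|{: shell_code d K k}|%:R *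
      (if m < k%:R then a * k%:R `^ (- alpha) else 0) <=
    4 * d.+1%:R * 3 ^+ d * (2 * K + 1)%:R ^+ d.+1 * a * m `^ (d%:R + 1 - alpha).
Proof.
move=> a0 m1 ha M.
set c := (2 * K + 1)%:R ^+ d.+1 * (2 * d.+1%:R) * a.
have -> : \sum_(k < M) #|{: shell_code d K k}|%:R *
      (if m < k%:R then a * k%:R `^ (- alpha) else 0) =
    c * \sum_(k < M | m < k%:R) (2 * k + 1)%:R ^+ d * k%:R `^ (- alpha).
  rewrite mulr_sumr [in RHS]big_mkcond /=; apply: eq_bigr => k _.
  case: ifP => _; last by rewrite mulr0.
  rewrite card_shell_code /c -[(2 * K).+1]addn1 -[(2 * k).+1]addn1.
  by rewrite !natrM !natrX; ring.
have c0 : 0 <= c by rewrite /c !mulr_ge0 ?exprn_ge0 ?ler0n.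
apply: le_trans (ler_wpM2l c0 (shell_series_le m1 ha M)) _.
by rewrite /c le_eqVlt; apply/orP; left; apply/eqP; ring.
Qed.

Section UnionBound.
Variables (R : realType) (dT : measure_display) (T : measurableType dT).
Variables (P : probability T R) (d : nat) (alpha : R).
Variables (omega : Zd d.+1 -> Zd d.+1 -> T -> R).
Hypothesis homega : iid_exp1_edges P omega.

Definition light_edge (a : R) (z w : Zd d.+1) : set T :=
  [set t | Wgt alpha omega z w t < a].

Lemma light_edgeE a z w : (0 : R) < l1dist z w ->
  light_edge a z w = omega z w @^-1` `]-oo, a * rpow alpha (l1dist z w)[.
Proof.
move=> zw0; apply/seteqP; split => t;
  by rewrite /light_edge /= in_itv /= /Wgt /rpow ltr_pdivrMr ?powR_gt0.
Qed.

Lemma measurable_light_edge a z w : (0 : R) < l1dist z w ->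
  measurable (light_edge a z w).
Proof.
move=> zw0; case: homega => _ omega_m _ _.
rewrite light_edgeE // -[_ @^-1` _]setTI.
exact: omega_m (l1dist_gt0_neq zw0) measurableT _ (measurable_itv _).
Qed.

Lemma light_edge_prob_le a z w : 0 < a -> (0 : R) < l1dist z w ->
  (P (light_edge a z w) <= (a * rpow alpha (l1dist z w))%:E)%E.
Proof.
move=> a0 zw0; case: homega => _ omega_m omega_law _.
have zw := l1dist_gt0_neq zw0.
have ar0 : 0 < a * rpow alpha (l1dist z w) by rewrite mulr_gt0 ?powR_gt0.
have preimage_m (A : set R) : measurable A -> measurable (omega z w @^-1` A).
  by move=> Am; rewrite -[_ @^-1` _]setTI; exact: omega_m.
rewrite light_edgeE //.
apply: (@le_trans _ _ (P (omega z w @^-1` `]-oo, a * rpow alpha (l1dist z w)]))).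
  apply: le_measure; rewrite ?inE; try exact: preimage_m.
  by move=> t /=; rewrite !in_itv /= => /ltW.
by rewrite omega_law //; exact: exponential_prob_Iic_le.
Qed.

Definition code_event (a m : R) K k (x : shell_code d K k) : set T :=
  if m < k%:R then light_edge a (code_pair x).1 (code_pair x).2 else set0.

Lemma measurable_code_event a m K k (x : shell_code d K k) : 0 <= m ->
  measurable (code_event a m x).
Proof.
rewrite /code_event => m0; case: ifPn => // mk.
by apply: measurable_light_edge; apply: lt_le_trans (l1dist_code_pair_ge _ x); lra.
Qed.

Lemma code_event_prob_le a m K k (x : shell_code d K k) :
  0 < a -> 0 <= m -> 0 <= alpha ->
  (P (code_event a m x) <= (if m < k%:R then a * k%:R `^ (- alpha) else 0)%:E)%E.
Proof.
rewrite /code_event => a0 m0 alpha0; case: ifPn => [mk|_]; last by rewrite measure0.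
have k_le := l1dist_code_pair_ge R x.
have zw0 : (0 : R) < l1dist (code_pair x).1 (code_pair x).2 by lra.
apply: (le_trans (light_edge_prob_le a0 zw0)).
rewrite lee_fin ler_wpM2l ?(ltW a0) //; apply: ler_powRN => //; lra.
Qed.

Definition good_event (a m s : R) : set T :=
  [set t | forall z w : Zd d.+1, inB (@zeroZd d.+1) s z -> ~ inB z m w ->
             a <= Wgt alpha omega z w t].

Definition far_events (a m s : R) : set T :=
  \bigcup_k \big[setU/set0]_(x : shell_code d (Num.trunc s) k) code_event a m x.

Lemma measurable_far_events a m s : 0 <= m -> measurable (far_events a m s).
Proof.
move=> m0; apply: bigcup_measurable => k _.
by apply: bigsetU_measurable => x _; exact: measurable_code_event.
Qed.

Lemma good_eventE a m s : 0 <= m -> 0 <= s ->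
  good_event a m s = ~` far_events a m s.
Proof.
move=> m0 s0; apply/seteqP; split => t.
  move=> good [k _ /bigsetU_finP[x]]; rewrite /code_event.
  case: ifPn => // mk; have [zin wfar] := code_pair_far x s0 mk.
  by rewrite /light_edge /=; have := good _ _ zin wfar; lra.
move=> not_far z w zin wfar; rewrite leNgt; apply/negP => light; apply: not_far.
have [k [x [xE kE]]] := @code_pair_surj _ _ z w (fun j => inB0_coord_le j s0 zin).
exists k => //; apply/bigsetU_finP; exists x.
have mk : m < k%:R by move/negP: wfar; rewrite /inB -ltNge [_%:R]pmulrn kE.
by rewrite /code_event mk xE.
Qed.

Lemma far_events_prob_le a m s B : 0 < a -> 0 <= m -> 0 <= alpha ->
  (forall M, \sum_(k < M) #|{: shell_code d (Num.trunc s) k}|%:R *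
      (if m < k%:R then a * k%:R `^ (- alpha) else 0) <= B) ->
  (P (far_events a m s) <= B%:E)%E.
Proof.
move=> a0 m0 alpha0 partial_le.
pose b k := if m < k%:R then a * k%:R `^ (- alpha) else 0.
have b0 k : 0 <= b k by rewrite /b; case: ifP => // _; rewrite mulr_ge0 ?powR_ge0 ?ltW.
have shell_m k : measurable
    (\big[setU/set0]_(x : shell_code d (Num.trunc s) k) code_event a m x).
  by apply: bigsetU_measurable => x _; exact: measurable_code_event.
apply: le_trans (measure_sigma_subadditive P shell_m
  (measurable_far_events a s m0) (@subset_refl _ _)) _.
apply: (@le_trans _ _ (\sum_(k <oo) (#|{: shell_code d (Num.trunc s) k}|%:R * b k)%:E)%E).
  apply: lee_nneseries => [k _ _|k _]; first exact: measure_ge0.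
  apply: le_trans (content_bigsetU_le _ _) _ => [x|]; first exact: measurable_code_event.
  apply: (@le_trans _ _ (\sum_(x : shell_code d (Num.trunc s) k) (b k)%:E)).
    by apply: lee_sum => x _; exact: code_event_prob_le.
  by rewrite sumEFin sumr_const mulr_natl.
apply: lime_le; first by apply: is_cvg_nneseries => k _ _; rewrite lee_fin mulr_ge0.
by apply: nearW => M /=; rewrite sumEFin lee_fin big_mkord; exact: partial_le.
Qed.

Lemma good_event_prob_ge a m s : 0 < a -> 1 <= m -> 0 <= s -> d%:R + 2 <= alpha ->
  ((1 - 4 * d.+1%:R * 3 ^+ d * (2 * Num.trunc s + 1)%:R ^+ d.+1 * a *
         m `^ (d%:R + 1 - alpha))%:E <= P (good_event a m s))%E.
Proof.
move=> a0 m1 s0 ha; have m0 : 0 <= m by lra.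
rewrite good_eventE // probability_setC; last exact: measurable_far_events.
have d0 : (0 : R) <= d%:R by rewrite ler0n.
rewrite EFinB; apply: leeB => //; apply: far_events_prob_le => //; first lra.
exact: shell_code_sum_le (ltW a0) m1 ha.
Qed.

End UnionBound.

Lemma far_bound_le (R : realType) (d : nat) (alpha theta c1 c2 N : R) :
  1 <= N -> 0 < c1 -> 0 < c2 ->
  4 * d.+1%:R * 3 ^+ d * (2 * Num.trunc (c2 * N) + 1)%:R ^+ d.+1 * (c1 * N) *
      (N `^ theta) `^ (d%:R + 1 - alpha) <=
    4 * d.+1%:R * c1 * 3 ^+ d * (2 * c2 + 1) ^+ d.+1 *
      N `^ (d.+1%:R + 1 - theta * (alpha - d.+1%:R)).
Proof.
move=> N1 c1_0 c2_0; have N0 : 0 < N by lra.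
have box_le : (2 * Num.trunc (c2 * N) + 1)%:R <= (2 * c2 + 1) * N.
  have cN0 : 0 <= c2 * N by rewrite mulr_ge0 // ltW.
  have := truncn_le (c2 * N); rewrite cN0 => K_le.
  by rewrite natrD natrM; nra.
have powE : (N `^ theta) `^ (d%:R + 1 - alpha) * N * N ^+ d.+1 =
    N `^ (d.+1%:R + 1 - theta * (alpha - d.+1%:R)).
  rewrite -powRrM -(powR_mulrn d.+1 (ltW N0)) -{2}(powRr1 (ltW N0)).
  rewrite -!powRD; try by apply/implyP => _; lra.
  by congr (_ `^ _); rewrite -natr1; ring.
set X := 4 * d.+1%:R * 3 ^+ d * c1 * (N `^ theta) `^ (d%:R + 1 - alpha) * N.
have X0 : 0 <= X by rewrite /X !mulr_ge0 ?powR_ge0 ?exprn_ge0 ?ler0n ?ltW.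
apply: (@le_trans _ _ (X * ((2 * c2 + 1) * N) ^+ d.+1)).
  rewrite [leLHS](_ : _ = X * (2 * Num.trunc (c2 * N) + 1)%:R ^+ d.+1); last first.
    by rewrite /X; ring.
  by apply: ler_wpM2l => //; apply: lerXn2r; rewrite ?nnegrE ?ler0n //; nra.
by rewrite -powE /X exprMn le_eqVlt; apply/orP; left; apply/eqP; ring.
Qed.

Unset Implicit Arguments. Set Strict Implicit.

Theorem lemma8p1 (R : realType) (d : nat) (hd : (1 <= d)%N)
  (alpha theta c1 c2 : R)
  (halpha : 2 * d%:R + 1 < alpha) (htheta0 : 0 < theta) (htheta1 : theta < 1)
  (hc1 : 0 < c1) (hc2 : 0 < c2)
  (dT : measure_display) (T : measurableType dT) (P : probability T R)
  (omega : Zd d -> Zd d -> T -> R) (homega : iid_exp1_edges P omega) :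
  exists C : R, 0 < C /\
    forall n : nat, (1 <= n)%N ->
      ((1 - C * n%:R `^ (d%:R + 1 - theta * (alpha - d%:R)))%:E <=
       P [set t | forall z w : Zd d,
                    inB (@zeroZd d) (c2 * n%:R)%R z ->
                    ~ inB z (n%:R `^ theta)%R w ->
                    (c1 * n%:R <= Wgt alpha omega z w t)%R])%E.
Proof.
case: d hd omega homega halpha => [//|d] _ omega homega halpha.
exists (4 * d.+1%:R * c1 * 3 ^+ d * (2 * c2 + 1) ^+ d.+1); split.
  by rewrite !mulr_gt0 ?exprn_gt0 ?ltr0n //; lra.
move=> n n1; have N1 : (1 : R) <= n%:R by rewrite ler1n.
set N := (n%:R : R) in N1 *.
have m1 : 1 <= N `^ theta by rewrite -(powRr0 N) ler_powR // ltW.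
have d_alpha : d%:R + 2 <= alpha.
  by move: halpha; rewrite -natr1; have := ler0n R d; lra.
have a0 : 0 < c1 * N by rewrite mulr_gt0 //; lra.
have s0 : 0 <= c2 * N by rewrite mulr_ge0 //; lra.
apply: le_trans (good_event_prob_ge homega a0 m1 s0 d_alpha).
by rewrite lee_fin lerD2l lerN2 far_bound_le //; lra.
Qed.
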